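(* $$\sum _{n=0}^{\infty } \frac{\binom{2 n}{n}^2 H_{2 n}}{16^n(2 n - 1)} = \frac{6 \ln (2)-2}{\pi }.$$
   Context: $H_k = \sum_{j=1}^k \frac1j$ is the $k$-th harmonic number, with $H_0 = 0$. *)

From Stdlib Require Import Reals.
From Coquelicot Require Import Coquelicot.
Open Scope R_scope.

Fixpoint harmonic (k : nat) : R :=
  match k with
  | O => 0
  | S k' => harmonic k' + / INR (S k')
  end.

From Stdlib Require Import Reals Lra Lia.
From Coquelicot Require Import Coquelicot.
Open Scope R_scope.

(* Write a_n = C(2n,n)/4^n ([wallis]) and h_n = a_n H_(2n) ([wallis_harmonic]).  For n >= 1
   the summand a_n h_n / (2n - 1) equals (2/PI) h_n int_0^(PI/2) sin^(2n-2) t cos^2 t dt by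
   Wallis' integrals.  The recurrences 2(n+1) a_(n+1) = (2n+1) a_n and
   2(n+1) h_(n+1) = (2n+1) h_n + a_n + a_(n+1) are first-order differential equations for the
   generating functions, whose solutions are sum a_n x^n = 1/sqrt(1-x) and
   sqrt(1-x) sum h_n x^n = ln((1 + sqrt(1-x))/2) - ln(1-x).  Putting x = sin^2 t and summing
   under the integral leaves int_0^(PI/2) cos t (ln((1 + cos t)/2) - 2 ln(cos t)) / sin^2 t dt,
   whose explicit primitive tends to 0 at 0 and to 3 ln 2 - 1 at PI/2.  Summation and
   integration commute by monotone convergence: all terms are nonnegative, and on a segment
   [e, b] inside (0, PI/2) the series is dominated by its value at b. *)

(** * Central binomial coefficients *)

Definition wallis (n : nat) : R := Binomial.C (2 * n) n / 4 ^ n.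

Definition wallis_harmonic (n : nat) : R := wallis n * harmonic (2 * n).

Lemma wallis_0 : wallis 0 = 1.
Proof. unfold wallis, Binomial.C; simpl; field. Qed.

Lemma wallis_S n : 2 * INR (S n) * wallis (S n) = (2 * INR n + 1) * wallis n.
Proof.
  unfold wallis, Binomial.C.
  replace (2 * S n - S n)%nat with (S n) by lia.
  replace (2 * n - n)%nat with n by lia.
  replace (2 * S n)%nat with (S (S (2 * n))) by lia.
  rewrite !fact_simpl, !mult_INR, !S_INR, mult_INR; simpl pow; simpl INR.
  assert (Hn := INR_fact_neq_0 n).
  assert (H2n := INR_fact_neq_0 (2 * n)).
  assert (H4 : 4 ^ n <> 0) by (apply pow_nonzero; lra).
  assert (0 <= INR n) by apply pos_INR.
  field; repeat split; lra.
Qed.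

Lemma wallis_S_ratio n : wallis (S n) = wallis n * (2 * INR n + 1) / (2 * INR n + 2).
Proof.
  assert (E := wallis_S n); rewrite S_INR in E.
  assert (0 <= INR n) by apply pos_INR.
  apply Rmult_eq_reg_l with (2 * INR n + 2); [| lra].
  rewrite (Rmult_comm _ (_ / _)); unfold Rdiv; rewrite Rmult_assoc, Rinv_l by lra; lra.
Qed.

Lemma wallis_bounds n : 0 < wallis n <= 1.
Proof.
  induction n as [|n IH]; [rewrite wallis_0; lra|].
  rewrite wallis_S_ratio.
  assert (0 <= INR n) by apply pos_INR.
  split.
  - apply Rdiv_lt_0_compat; [apply Rmult_lt_0_compat|]; lra.
  - apply Rmult_le_reg_r with (2 * INR n + 2); [lra|].
    unfold Rdiv; rewrite Rmult_assoc, Rinv_l by lra; nra.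
Qed.

Lemma harmonic_double_S n :
  harmonic (2 * S n) = harmonic (2 * n) + / (2 * INR n + 1) + / (2 * INR n + 2).
Proof.
  replace (2 * S n)%nat with (S (S (2 * n))) by lia.
  change (harmonic (S (S (2 * n))))
    with (harmonic (2 * n) + / INR (S (2 * n)) + / INR (S (S (2 * n)))).
  replace (INR (S (2 * n))) with (2 * INR n + 1) by (rewrite S_INR, mult_INR; simpl; ring).
  replace (INR (S (S (2 * n)))) with (2 * INR n + 2) by (rewrite !S_INR, mult_INR; simpl; ring).
  reflexivity.
Qed.

Lemma harmonic_bounds k : 0 <= harmonic k <= INR k.
Proof.
  induction k as [|k IH]; [simpl; lra|].
  change (harmonic (S k)) with (harmonic k + / INR (S k)).
  rewrite S_INR.
  assert (0 <= INR k) by apply pos_INR.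
  assert (0 < / (INR k + 1) <= 1).
  { split; [apply Rinv_0_lt_compat; lra|].
    rewrite <- Rinv_1; apply Rinv_le_contravar; lra. }
  lra.
Qed.

Lemma wallis_harmonic_0 : wallis_harmonic 0 = 0.
Proof. unfold wallis_harmonic; simpl; ring. Qed.

Lemma wallis_harmonic_S n :
  2 * INR (S n) * wallis_harmonic (S n)
  = (2 * INR n + 1) * wallis_harmonic n + (wallis n + wallis (S n)).
Proof.
  unfold wallis_harmonic.
  rewrite harmonic_double_S, wallis_S_ratio, S_INR.
  assert (0 <= INR n) by apply pos_INR.
  field; lra.
Qed.

Lemma wallis_harmonic_bounds n : 0 <= wallis_harmonic n <= 2 * INR n.
Proof.
  unfold wallis_harmonic.
  assert (Hh := harmonic_bounds (2 * n)); rewrite mult_INR in Hh; simpl INR in Hh.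
  assert (Hw := wallis_bounds n).
  split; nra.
Qed.

Lemma ln_le_sub_1 y : 0 < y -> ln y <= y - 1.
Proof.
  intros Hy; rewrite <- (ln_exp (y - 1)).
  apply ln_le; [exact Hy|].
  assert (H := exp_ineq1_le (y - 1)); lra.
Qed.

Lemma eq_of_is_derive_0 (f : R -> R) (a b : R) : a <= b ->
  (forall y, a <= y <= b -> ex_derive f y) ->
  (forall y, a < y < b -> is_derive f y 0) -> f b = f a.
Proof.
  intros Hab Hex Hd.
  destruct (MVT_gen f a b (fun _ => 0)) as [z [_ Hz]];
    rewrite ?Rmin_left, ?Rmax_right by lra; [exact Hd| |lra].
  intros y Hy; apply continuity_pt_filterlim.
  apply (ex_derive_continuous (V := R_NormedModule)), Hex, Hy.
Qed.

Lemma at_right_interval x y : x < y -> at_right x (fun t => x < t < y).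
Proof.
  intros Hxy; exists (mkposreal (y - x) ltac:(lra)); simpl.
  intros t Hball Ht; apply Rabs_lt_between' in Hball; lra.
Qed.

Lemma at_left_interval x y : y < x -> at_left x (fun t => y < t < x).
Proof.
  intros Hxy; exists (mkposreal (x - y) ltac:(lra)); simpl.
  intros t Hball Ht; apply Rabs_lt_between' in Hball; lra.
Qed.

Lemma filterlim_within_continuous (f : R -> R) (x l : R) (D : R -> Prop) :
  continuous f x -> f x = l -> filterlim f (within D (locally x)) (locally l).
Proof. intros Hf <-; exact (filterlim_filter_le_1 _ (filter_le_within _) Hf). Qed.

Lemma ex_RInt_smooth (f : R -> R) (a b : R) : (forall x, ex_derive f x) -> ex_RInt f a b.
Proof.
  intros Hf; apply (ex_RInt_continuous (V := R_CompleteNormedModule)); intros x _.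
  apply (ex_derive_continuous (V := R_NormedModule)), Hf.
Qed.

Lemma continuous_RInt_lower (f : R -> R) (b x : R) :
  (forall t, ex_derive f t) -> continuous (fun a => RInt f a b) x.
Proof.
  intros Hf; apply (continuous_RInt_2 f x b).
  apply filter_forall; intros a.
  apply (RInt_correct (V := R_CompleteNormedModule)), ex_RInt_smooth, Hf.
Qed.

Lemma continuous_RInt_upper (f : R -> R) (a x : R) :
  (forall t, ex_derive f t) -> continuous (fun b => RInt f a b) x.
Proof.
  intros Hf; apply (continuous_RInt_1 f a x).
  apply filter_forall; intros b.
  apply (RInt_correct (V := R_CompleteNormedModule)), ex_RInt_smooth, Hf.
Qed.

Lemma is_RInt_sum_n (f : nat -> R -> R) (I : nat -> R) (a b : R) (M : nat) :
  (forall m, is_RInt (f m) a b (I m)) ->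
  is_RInt (fun t => sum_n (fun m => f m t) M) a b (sum_n I M).
Proof.
  intros Hf; induction M as [|M IH].
  - rewrite sum_O; apply (is_RInt_ext (f 0%nat)); [|apply Hf].
    intros t _; rewrite sum_O; reflexivity.
  - rewrite sum_Sn; apply (is_RInt_ext (fun t => plus (sum_n (fun m => f m t) M) (f (S M) t))).
    + intros t _; rewrite sum_Sn; reflexivity.
    + apply (is_RInt_plus (V := R_NormedModule)); [exact IH | apply Hf].
Qed.

Lemma sum_n_le_is_series (a : nat -> R) (l : R) :
  (forall n, 0 <= a n) -> is_series a l -> forall M, sum_n a M <= l.
Proof.
  intros Ha Hl M; apply is_lim_seq_incr_compare; [exact Hl|].
  intros n; rewrite sum_Sn; specialize (Ha (S n)); unfold plus; simpl; lra.
Qed.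

Lemma is_series_tail_le (u w : nat -> R) (U W : R) :
  (forall n, 0 <= u n <= w n) -> is_series u U -> is_series w W ->
  forall M, 0 <= U - sum_n u M <= W - sum_n w M.
Proof.
  intros Huw HU HW M; split.
  - assert (sum_n u M <= U) by (apply sum_n_le_is_series; [intros n; apply Huw | exact HU]); lra.
  - assert (Hdiff := is_series_minus (V := R_NormedModule) _ _ _ _ HW HU).
    assert (Hle : sum_n (fun n => plus (w n) (opp (u n))) M <= plus W (opp U)).
    { apply sum_n_le_is_series; [|exact Hdiff].
      intros n; specialize (Huw n); unfold plus, opp; simpl; lra. }
    assert (E : sum_n (fun n => plus (w n) (opp (u n))) M = sum_n w M - sum_n u M).
    { clear Hle; induction M as [|M IH]; [rewrite !sum_O | rewrite !sum_Sn, IH];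
        unfold plus, opp; simpl; ring. }
    rewrite E in Hle; unfold plus, opp in Hle; simpl in Hle; lra.
Qed.

Lemma is_series_of_sum_n_sup (a : nat -> R) (l : R) :
  (forall n, 0 <= a n) -> (forall M, sum_n a M <= l) ->
  (forall eps, 0 < eps -> exists M, l - eps < sum_n a M) -> is_series a l.
Proof.
  intros Ha Hle Happrox.
  change (is_lim_seq (sum_n a) l); apply is_lim_seq_spec; intros eps.
  destruct (Happrox eps (cond_pos eps)) as [M HM].
  exists M; intros n Hn.
  assert (Hmono : sum_n a M <= sum_n a n).
  { apply Rge_le, (growing_prop (sum_n a)); [|exact Hn].
    intros k; rewrite sum_Sn; specialize (Ha (S k)); unfold plus; simpl; lra. }
  specialize (Hle n); apply Rabs_lt_between'; lra.
Qed.

(** * Generating functions *)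

Lemma succ_mul_pow_le (r : R) (n : nat) : 0 <= r < 1 -> INR (S n) * r ^ n <= / (1 - r).
Proof.
  intros Hr.
  assert (Hgeom : INR (S n) * r ^ n * (1 - r) <= 1 - r ^ S n).
  { induction n as [|n IH]; [simpl; lra|].
    assert (0 <= r ^ S n <= 1).
    { split; [apply pow_le; lra|]. rewrite <- (pow1 (S n)); apply pow_incr; lra. }
    rewrite !S_INR in *; simpl pow in *.
    assert (0 <= INR n) by apply pos_INR.
    set (p := r ^ n) in *; set (q := INR n) in *.
    assert (r * ((q + 1) * p * (1 - r)) <= r * (1 - r * p)) by (apply Rmult_le_compat_l; lra).
    assert (0 <= (1 - r) * (1 - r * p)) by (apply Rmult_le_pos; lra).
    nra. }
  apply Rmult_le_reg_r with (1 - r); [lra|].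
  rewrite Rinv_l by lra.
  assert (0 <= r ^ S n) by (apply pow_le; lra).
  lra.
Qed.

Lemma CV_radius_linear_bound (c : nat -> R) (C : R) :
  (forall n, Rabs (c n) <= C * INR (S n)) ->
  forall x, Rabs x < 1 -> Rbar_lt (Rabs x) (CV_radius c).
Proof.
  intros Hc x Hx.
  set (r := (Rabs x + 1) / 2).
  assert (Hr : 0 <= r < 1) by (assert (0 <= Rabs x) by apply Rabs_pos; unfold r; lra).
  apply Rbar_lt_le_trans with r; [simpl; unfold r; lra|].
  apply (CV_radius_bounded c); exists (C / (1 - r)); intros n.
  rewrite Rabs_mult, (Rabs_pos_eq (r ^ n)) by (apply pow_le; lra).
  assert (Hn := succ_mul_pow_le r n Hr).
  assert (0 <= r ^ n) by (apply pow_le; lra).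
  assert (HC : 0 <= C).
  { assert (H0 := Hc 0%nat); assert (0 <= Rabs (c 0%nat)) by apply Rabs_pos.
    simpl INR in H0; lra. }
  apply Rle_trans with (C * INR (S n) * r ^ n).
  - apply Rmult_le_compat_r; auto.
  - unfold Rdiv; rewrite Rmult_assoc; apply Rmult_le_compat_l; auto.
Qed.

Section SqrtPSeries.

Variables c d : nat -> R.
Hypothesis c_rec : forall n, 2 * INR (S n) * c (S n) = (2 * INR n + 1) * c n + d n.
Hypothesis c_radius : forall y, Rabs y < 1 -> Rbar_lt (Rabs y) (CV_radius c).

Lemma PSeries_sqrt_ode y : Rabs y < 1 ->
  2 * (1 - y) * PSeries (PS_derive c) y - PSeries c y = PSeries d y.
Proof.
  intros Hy.
  set (D := PS_derive c).
  assert (HD : is_pseries D y (PSeries D y)).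
  { apply PSeries_correct, CV_radius_inside; unfold D; rewrite CV_radius_derive; auto. }
  assert (HC : is_pseries c y (PSeries c y)) by (apply PSeries_correct, CV_radius_inside; auto).
  assert (Hcomb := is_pseries_minus _ _ _ _ _
    (is_pseries_scal 2 _ _ _ (Rmult_comm _ _)
      (is_pseries_minus _ _ _ _ _ HD (is_pseries_incr_1 _ _ _ HD))) HC).
  replace (plus _ _) with (2 * (1 - y) * PSeries D y - PSeries c y) in Hcomb
    by (change (2 * (1 - y) * PSeries D y - PSeries c y
          = 2 * (PSeries D y + - (y * PSeries D y)) + - PSeries c y); ring).
  symmetry; apply is_pseries_unique.
  eapply is_pseries_ext; [|exact Hcomb].
  intros n; unfold PS_minus, PS_scal, PS_incr_1, D, PS_derive;
    unfold plus, scal, opp, zero; cbn -[INR]; unfold mult; cbn -[INR].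
  replace (d n) with (2 * INR (S n) * c (S n) - (2 * INR n + 1) * c n) by (rewrite c_rec; ring).
  destruct n as [|n]; rewrite ?S_INR; simpl INR; ring.
Qed.

Lemma is_derive_sqrt_PSeries y : Rabs y < 1 ->
  is_derive (fun t => sqrt (1 - t) * PSeries c t) y (PSeries d y / (2 * sqrt (1 - y))).
Proof.
  intros Hy; assert (Hy' := Rabs_def2 _ _ Hy).
  assert (Hs : 0 < sqrt (1 - y)) by (apply sqrt_lt_R0; lra).
  assert (Hs2 := sqrt_sqrt (1 - y) ltac:(lra)).
  assert (Hsqrt : is_derive (fun t => sqrt (1 - t)) y (- / (2 * sqrt (1 - y))))
    by (auto_derive; [lra | unfold Rminus; ring]).
  assert (Hprod := is_derive_mult _ _ y _ _ Hsqrt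
    (is_derive_PSeries c y (c_radius y Hy)) Rmult_comm).
  replace (PSeries d y / _)
    with (- / (2 * sqrt (1 - y)) * PSeries c y + sqrt (1 - y) * PSeries (PS_derive c) y);
    [exact Hprod|].
  rewrite <- PSeries_sqrt_ode by exact Hy.
  set (s := sqrt (1 - y)) in *; rewrite <- Hs2; field; lra.
Qed.

End SqrtPSeries.

Lemma wallis_radius x : Rabs x < 1 -> Rbar_lt (Rabs x) (CV_radius wallis).
Proof.
  apply (CV_radius_linear_bound _ 1); intros n.
  destruct (wallis_bounds n); rewrite Rabs_pos_eq, S_INR by lra.
  assert (0 <= INR n) by apply pos_INR; lra.
Qed.

Lemma wallis_harmonic_radius x : Rabs x < 1 -> Rbar_lt (Rabs x) (CV_radius wallis_harmonic).
Proof.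
  apply (CV_radius_linear_bound _ 2); intros n.
  destruct (wallis_harmonic_bounds n); rewrite Rabs_pos_eq, S_INR by lra; lra.
Qed.

Lemma PSeries_wallis x : 0 <= x < 1 -> PSeries wallis x = / sqrt (1 - x).
Proof.
  intros Hx.
  set (f t := sqrt (1 - t) * PSeries wallis t).
  assert (Hderiv : forall y, 0 <= y <= x -> is_derive f y 0).
  { intros y Hy.
    replace 0 with (PSeries (fun _ => 0) y / (2 * sqrt (1 - y)))
      by (rewrite PSeries_const_0; unfold Rdiv; ring).
    apply is_derive_sqrt_PSeries; [| exact wallis_radius | apply Rabs_def1; lra].
    intros n; rewrite Rplus_0_r; apply wallis_S. }
  assert (E : f x = f 0).
  { apply eq_of_is_derive_0; [lra | intros y Hy; eexists; apply Hderiv, Hy |].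
    intros y Hy; apply Hderiv; lra. }
  unfold f in E; rewrite PSeries_0, wallis_0, Rminus_0_r, sqrt_1, Rmult_1_l in E.
  assert (0 < sqrt (1 - x)) by (apply sqrt_lt_R0; lra).
  apply Rmult_eq_reg_l with (sqrt (1 - x)); [rewrite E; field|]; lra.
Qed.

Lemma PSeries_wallis_add_shift y : 0 < y < 1 ->
  PSeries (fun n => wallis n + wallis (S n)) y = / sqrt (1 - y) + (/ sqrt (1 - y) - 1) / y.
Proof.
  intros Hy.
  assert (Hy' : Rabs y < 1) by (apply Rabs_def1; lra).
  assert (Hex := CV_radius_inside _ _ (wallis_radius y Hy')).
  assert (Hex_shift : ex_pseries (PS_decr_1 wallis) y)
    by (apply CV_radius_inside; rewrite CV_radius_decr_1; apply wallis_radius, Hy').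
  assert (Hshift := PSeries_decr_1 wallis y Hex).
  rewrite PSeries_wallis, wallis_0 in Hshift by lra.
  transitivity (PSeries wallis y + PSeries (PS_decr_1 wallis) y);
    [exact (PSeries_plus wallis (PS_decr_1 wallis) y Hex Hex_shift)|].
  rewrite PSeries_wallis by lra; f_equal.
  rewrite Hshift; field; lra.
Qed.

Lemma is_derive_ln_sqrt y : y < 1 ->
  is_derive (fun t => ln ((1 + sqrt (1 - t)) / 2) - ln (1 - t)) y
    (/ (1 - y) - / (2 * sqrt (1 - y) * (1 + sqrt (1 - y)))).
Proof.
  intros Hy.
  assert (0 < sqrt (1 - y)) by (apply sqrt_lt_R0; lra).
  assert (Hs2 := sqrt_sqrt (1 - y) ltac:(lra)).
  auto_derive; change (1 + - y) with (1 - y).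
  - repeat split; try lra; apply Rmult_lt_0_compat; lra.
  - set (s := sqrt (1 - y)) in *; rewrite <- Hs2; field; lra.
Qed.

Lemma PSeries_wallis_harmonic x : 0 <= x < 1 ->
  sqrt (1 - x) * PSeries wallis_harmonic x = ln ((1 + sqrt (1 - x)) / 2) - ln (1 - x).
Proof.
  intros Hx.
  set (f t := sqrt (1 - t) * PSeries wallis_harmonic t
              - (ln ((1 + sqrt (1 - t)) / 2) - ln (1 - t))).
  set (df y := PSeries (fun n => wallis n + wallis (S n)) y / (2 * sqrt (1 - y))
               - (/ (1 - y) - / (2 * sqrt (1 - y) * (1 + sqrt (1 - y))))).
  assert (Hderiv : forall y, 0 <= y <= x -> is_derive f y (df y)).
  { intros y Hy.
    apply (is_derive_minus (fun t => sqrt (1 - t) * PSeries wallis_harmonic t)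
             (fun t => ln ((1 + sqrt (1 - t)) / 2) - ln (1 - t)));
      [|apply is_derive_ln_sqrt; lra].
    apply is_derive_sqrt_PSeries; [exact wallis_harmonic_S | exact wallis_harmonic_radius |].
    apply Rabs_def1; lra. }
  assert (E : f x = f 0).
  { apply eq_of_is_derive_0; [lra | intros y Hy; eexists; apply Hderiv, Hy |].
    intros y Hy.
    assert (Hzero : df y = 0).
    { assert (0 < sqrt (1 - y)) by (apply sqrt_lt_R0; lra).
      assert (Hs2 := sqrt_sqrt (1 - y) ltac:(lra)).
      unfold df; rewrite PSeries_wallis_add_shift by lra.
      set (s := sqrt (1 - y)) in *; replace y with (1 - s * s) by lra.
      field; repeat split; nra. }
    rewrite <- Hzero; apply Hderiv; lra. }
  unfold f in E.
  rewrite PSeries_0, wallis_harmonic_0, Rminus_0_r, sqrt_1 in E.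
  replace ((1 + 1) / 2) with 1 in E by field.
  rewrite ln_1 in E; lra.
Qed.

(** * Wallis integrals *)

Lemma RInt_sin_pow_parts k :
  RInt (fun t => sin t ^ (k + 2)) 0 (PI / 2)
  = INR (S k) * RInt (fun t => sin t ^ k * cos t ^ 2) 0 (PI / 2).
Proof.
  set (g t := sin t ^ S k * cos t).
  assert (Hg : forall t, is_derive g t (INR (S k) * (sin t ^ k * cos t ^ 2) - sin t ^ (k + 2))).
  { intros t; unfold g; auto_derive; auto.
    change (match k with 0%nat => 1 | S _ => INR k + 1 end) with (INR (S k)).
    rewrite pow_add; ring. }
  assert (Hcont : forall t,
    continuous (fun t => INR (S k) * (sin t ^ k * cos t ^ 2) - sin t ^ (k + 2)) t)
    by (intros t; apply (ex_derive_continuous (V := R_NormedModule)); auto_derive; auto).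
  assert (FTC := is_RInt_derive g _ 0 (PI / 2) (fun t _ => Hg t) (fun t _ => Hcont t)).
  assert (Hbound : g (PI / 2) = 0 /\ g 0 = 0)
    by (unfold g; rewrite cos_PI2, sin_0; cbn [pow]; split; ring).
  apply is_RInt_unique in FTC.
  rewrite (RInt_minus (V := R_CompleteNormedModule)) in FTC
    by (apply ex_RInt_smooth; intros; auto_derive; auto).
  rewrite (RInt_scal (V := R_CompleteNormedModule)
             (fun t => sin t ^ k * cos t ^ 2)) in FTC
    by (apply ex_RInt_smooth; intros; auto_derive; auto).
  unfold minus, plus, opp, scal in FTC; cbn -[INR RInt g pow] in FTC; unfold mult in FTC;
    cbn -[INR RInt g pow] in FTC.
  lra.
Qed.

Lemma RInt_sin_pow_split k :
  RInt (fun t => sin t ^ k) 0 (PI / 2)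
  = RInt (fun t => sin t ^ (k + 2)) 0 (PI / 2)
    + RInt (fun t => sin t ^ k * cos t ^ 2) 0 (PI / 2).
Proof.
  rewrite <- (RInt_plus (V := R_CompleteNormedModule))
    by (apply ex_RInt_smooth; intros; auto_derive; auto).
  apply RInt_ext; intros t _.
  change (sin t ^ k = sin t ^ (k + 2) + sin t ^ k * cos t ^ 2).
  assert (Hpyth := sin2_cos2 t); unfold Rsqr in Hpyth.
  transitivity (sin t ^ k * (sin t * sin t + cos t * cos t));
    [rewrite Hpyth; ring | rewrite pow_add; ring].
Qed.

Lemma RInt_sin_pow_even m : RInt (fun t => sin t ^ (2 * m)) 0 (PI / 2) = PI / 2 * wallis m.
Proof.
  induction m as [|m IH].
  - simpl; rewrite RInt_const, wallis_0; unfold scal; simpl; unfold mult; simpl; ring.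
  - assert (Hparts := RInt_sin_pow_parts (2 * m)).
    assert (Hsplit := RInt_sin_pow_split (2 * m)).
    assert (Hw := wallis_S m).
    replace (2 * S m)%nat with (2 * m + 2)%nat by lia.
    rewrite S_INR, mult_INR in *; simpl INR in *.
    assert (0 <= INR m) by apply pos_INR.
    apply Rmult_eq_reg_l with (2 * (INR m + 1)); [|lra].
    transitivity ((2 * INR m + 1) * RInt (fun t => sin t ^ (2 * m)) 0 (PI / 2));
      [rewrite Hsplit, Hparts; ring|].
    rewrite IH; transitivity (PI / 2 * (2 * (INR m + 1) * wallis (S m))); [rewrite Hw|]; ring.
Qed.

Lemma RInt_sin_pow_cos2_even m :
  RInt (fun t => sin t ^ (2 * m) * cos t ^ 2) 0 (PI / 2) = PI / 2 * wallis m / (2 * INR m + 2).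
Proof.
  assert (Hparts := RInt_sin_pow_parts (2 * m)).
  assert (Hsplit := RInt_sin_pow_split (2 * m)).
  rewrite RInt_sin_pow_even in Hsplit.
  rewrite S_INR, mult_INR in Hparts; simpl INR in Hparts.
  assert (0 <= INR m) by apply pos_INR.
  apply Rmult_eq_reg_r with (2 * INR m + 2); [|lra].
  unfold Rdiv; rewrite Rmult_assoc, Rinv_l by lra; nra.
Qed.

Definition series_term (m : nat) (t : R) : R :=
  wallis_harmonic (S m) * (sin t ^ (2 * m) * cos t ^ 2).

Definition integrand (t : R) : R :=
  cos t * (ln ((1 + cos t) / 2) - 2 * ln (cos t)) / sin t ^ 2.

Lemma sin_cos_pos t : 0 < t < PI / 2 -> 0 < sin t < 1 /\ 0 < cos t < 1.
Proof.
  intros Ht.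
  assert (0 < sin t) by (apply sin_gt_0; lra).
  assert (0 < cos t) by (apply cos_gt_0; lra).
  assert (Hpyth := sin2_cos2 t); unfold Rsqr in Hpyth.
  split; split; nra.
Qed.

Lemma is_series_series_term t : 0 < t < PI / 2 ->
  is_series (fun m => series_term m t) (integrand t).
Proof.
  intros Ht; destruct (sin_cos_pos t Ht) as [[Hs Hs1] [Hc Hc1]].
  assert (Hpyth := sin2_cos2 t); unfold Rsqr in Hpyth.
  set (x := sin t ^ 2).
  assert (Hx : 0 < x < 1) by (unfold x; simpl; nra).
  assert (H1x : 1 - x = cos t ^ 2) by (unfold x; simpl; lra).
  assert (HH := PSeries_wallis_harmonic x ltac:(lra)).
  rewrite H1x, sqrt_pow2, ln_pow in HH by lra; simpl INR in HH.
  assert (Hser : is_series (fun n => wallis_harmonic n * x ^ n) (PSeries wallis_harmonic x)).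
  { apply is_pseries_R, PSeries_correct, CV_radius_inside, wallis_harmonic_radius.
    apply Rabs_def1; lra. }
  assert (Hshift : is_series (fun k => wallis_harmonic (S k) * x ^ S k)
                             (PSeries wallis_harmonic x)).
  { apply (is_series_incr_1 (V := R_NormedModule) (fun n => wallis_harmonic n * x ^ n)).
    rewrite wallis_harmonic_0.
    replace (plus _ _) with (PSeries wallis_harmonic x) by (unfold plus; simpl; ring).
    exact Hser. }
  assert (Hval : integrand t = cos t ^ 2 / x * PSeries wallis_harmonic x).
  { apply Rmult_eq_reg_l with (cos t); [|lra].
    replace (cos t * (cos t ^ 2 / x * PSeries wallis_harmonic x))
      with (cos t ^ 2 / x * (cos t * PSeries wallis_harmonic x)) by ring.
    rewrite HH; unfold integrand, x; field; lra. }
  rewrite Hval; apply (is_series_scal (V := R_NormedModule) (cos t ^ 2 / x)) in Hshift.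
  eapply is_series_ext; [|exact Hshift].
  intros m; change (cos t ^ 2 / x * (wallis_harmonic (S m) * x ^ S m) = series_term m t).
  unfold series_term, x; rewrite pow_mult; cbn [pow]; field; lra.
Qed.

Lemma series_term_nonneg m t : 0 <= series_term m t.
Proof.
  unfold series_term; rewrite pow_mult.
  destruct (wallis_harmonic_bounds (S m)).
  apply Rmult_le_pos; [lra|]; apply Rmult_le_pos; [apply pow_le|]; apply pow2_ge_0.
Qed.

Definition series_bound (b : R) (m : nat) : R := wallis_harmonic (S m) * sin b ^ (2 * m).

Lemma series_term_le m t b : 0 < t <= b -> b < PI / 2 ->
  0 <= series_term m t <= series_bound b m.
Proof.
  intros Ht Hb; split; [apply series_term_nonneg|]; unfold series_term, series_bound.
  destruct (sin_cos_pos t ltac:(lra)) as [[Hs _] [Hc Hc1]].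
  assert (Hst : sin t <= sin b).
  { destruct (Req_dec t b) as [->|]; [lra|]. left; apply sin_increasing_1; lra. }
  assert (Hpow : 0 <= sin t ^ (2 * m) <= sin b ^ (2 * m))
    by (split; [apply pow_le | apply pow_incr]; lra).
  assert (0 <= cos t ^ 2 <= 1) by (simpl; split; nra).
  destruct (wallis_harmonic_bounds (S m)).
  apply Rmult_le_compat_l; [lra|].
  apply Rle_trans with (sin t ^ (2 * m) * 1); [apply Rmult_le_compat_l|]; lra.
Qed.

Lemma is_series_series_term_bound b : 0 < b < PI / 2 ->
  is_series (series_bound b) (integrand b / cos b ^ 2).
Proof.
  intros Hb; destruct (sin_cos_pos b Hb) as [_ [Hc _]].
  assert (Hscal := is_series_scal (V := R_NormedModule) (/ cos b ^ 2) _ _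
                     (is_series_series_term b Hb)).
  replace (integrand b / cos b ^ 2) with (/ cos b ^ 2 * integrand b) by (unfold Rdiv; ring).
  eapply is_series_ext; [|exact Hscal].
  intros m; change (/ cos b ^ 2 * series_term m b = series_bound b m).
  unfold series_term, series_bound; field; lra.
Qed.

Lemma integrand_tail_le t b M : 0 < t <= b -> b < PI / 2 ->
  0 <= integrand t - sum_n (fun m => series_term m t) M
    <= integrand b / cos b ^ 2 - sum_n (series_bound b) M.
Proof.
  intros Ht Hb.
  apply is_series_tail_le; [intros m; apply series_term_le; lra | |].
  - apply is_series_series_term; lra.
  - apply is_series_series_term_bound; lra.
Qed.

Lemma integrand_bounds t b : 0 < t <= b -> b < PI / 2 ->
  0 <= integrand t <= integrand b / cos b ^ 2.
Proof.
  intros Ht Hb.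
  destruct (integrand_tail_le t b 0 Ht Hb) as [H0 H1].
  assert (Hterm := series_term_le 0 t b Ht Hb).
  rewrite !sum_O in H0; rewrite !sum_O in H1; cbv beta in H0, H1; lra.
Qed.

Definition primitive (t : R) : R :=
  (2 / sin t - 2) * ln (cos t) - ln ((1 + cos t) / 2) / sin t
  + 2 * ln (1 + sin t) - sin t / (1 + cos t).

Lemma is_derive_primitive t : 0 < t < PI / 2 -> is_derive primitive t (integrand t).
Proof.
  intros Ht; destruct (sin_cos_pos t Ht) as [[Hs Hs1] [Hc Hc1]].
  assert (Hpyth := sin2_cos2 t); unfold Rsqr in Hpyth.
  unfold primitive; auto_derive.
  - repeat split; try lra; apply Rgt_not_eq; lra.
  - transitivity (integrand t + (sin t * sin t + cos t * cos t - 1)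
                    * (2 / (cos t * (1 + sin t)) - 1 / (1 + cos t) ^ 2)).
    + unfold integrand, Rdiv; field; repeat split; lra.
    + rewrite Hpyth; ring.
Qed.

Lemma continuous_integrand t : 0 < t < PI / 2 -> continuous integrand t.
Proof.
  intros Ht; destruct (sin_cos_pos t Ht) as [[Hs _] [Hc Hc1]].
  apply (ex_derive_continuous (V := R_NormedModule)).
  unfold integrand; auto_derive; repeat split; try lra; apply Rgt_not_eq; simpl; nra.
Qed.

Lemma ex_RInt_integrand e b : 0 < e <= b -> b < PI / 2 -> ex_RInt integrand e b.
Proof.
  intros He Hb; apply (ex_RInt_continuous (V := R_CompleteNormedModule)); intros t Ht.
  rewrite Rmin_left, Rmax_right in Ht by lra.
  apply continuous_integrand; lra.
Qed.

Lemma RInt_integrand e b : 0 < e <= b -> b < PI / 2 ->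
  RInt integrand e b = primitive b - primitive e.
Proof.
  intros He Hb; apply is_RInt_unique.
  apply (is_RInt_derive primitive integrand);
    intros t Ht; rewrite Rmin_left, Rmax_right in Ht by lra.
  - apply is_derive_primitive; lra.
  - apply continuous_integrand; lra.
Qed.

Lemma primitive_lim_0 : filterlim primitive (at_right 0) (locally 0).
Proof.
  set (g t := - 2 * ln (cos t) + 2 * ln (1 + sin t) - sin t / (1 + cos t)).
  set (K := integrand (PI / 4) / cos (PI / 4) ^ 2).
  assert (HPI := PI_RGT_0).
  assert (Hlim : forall k,
    filterlim (fun t => g t - k * (sin t / cos t)) (at_right 0) (locally 0)).
  { intros k; apply filterlim_within_continuous.
    - apply (ex_derive_continuous (V := R_NormedModule)); unfold g.
      auto_derive; rewrite cos_0, sin_0; repeat split; lra.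
    - unfold g; rewrite cos_0, sin_0, Rplus_0_r, ln_1; field. }
  apply (filterlim_le_le (fun t => g t - K * (sin t / cos t)) primitive
           (fun t => g t - 0 * (sin t / cos t)) (Finite 0)); [|apply Hlim | apply Hlim].
  apply (filter_imp (fun t => 0 < t < PI / 4)); [|apply at_right_interval; lra].
  intros t Ht; destruct (sin_cos_pos t ltac:(lra)) as [[Hs _] [Hc _]].
  assert (Hint := integrand_bounds t (PI / 4) ltac:(lra) ltac:(lra)); fold K in Hint.
  assert (Htan : 0 <= sin t / cos t) by (apply Rlt_le, Rdiv_lt_0_compat; lra).
  replace (primitive t) with (g t - integrand t * (sin t / cos t))
    by (unfold primitive, g, integrand; field; lra).
  assert (integrand t * (sin t / cos t) <= K * (sin t / cos t))
    by (apply Rmult_le_compat_r; lra).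
  split; nra.
Qed.

Lemma primitive_lim_PI2 : filterlim primitive (at_left (PI / 2)) (locally (3 * ln 2 - 1)).
Proof.
  set (g t := - ln ((1 + cos t) / 2) / sin t + 2 * ln (1 + sin t) - sin t / (1 + cos t)).
  set (k t := cos t / (sin t * (1 + sin t))).
  assert (HPI := PI_RGT_0).
  assert (Hlim : forall a, filterlim (fun t => g t - a * k t) (at_left (PI / 2))
                                     (locally (3 * ln 2 - 1))).
  { intros a; apply filterlim_within_continuous.
    - apply (ex_derive_continuous (V := R_NormedModule)); unfold g, k.
      auto_derive; rewrite sin_PI2, cos_PI2; repeat split; lra.
    - unfold g, k; rewrite sin_PI2, cos_PI2.
      replace ((1 + 0) / 2) with (/ 2) by field; replace (1 + 1) with 2 by ring.
      rewrite ln_Rinv by lra; field. }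
  apply (filterlim_le_le (fun t => g t - 2 * k t) primitive (fun t => g t - 0 * k t)
           (Finite (3 * ln 2 - 1))); [|apply Hlim | apply Hlim].
  apply (filter_imp (fun t => PI / 4 < t < PI / 2)); [|apply at_left_interval; lra].
  intros t Ht; destruct (sin_cos_pos t ltac:(lra)) as [[Hs Hs1] [Hc Hc1]].
  assert (Hpyth := sin2_cos2 t); unfold Rsqr in Hpyth.
  set (a := 2 * (1 - sin t) / sin t).
  assert (Ha : 0 <= a) by (apply Rmult_le_pos; [|apply Rlt_le, Rinv_0_lt_compat]; lra).
  replace (primitive t) with (g t + a * ln (cos t)) by (unfold primitive, g, a; field; lra).
  assert (Hk : 2 * k t = a * / cos t).
  { unfold k, a; replace (cos t) with (cos t * cos t * / cos t) at 1 by (field; lra).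
    replace (cos t * cos t) with ((1 - sin t) * (1 + sin t)) by nra.
    field; lra. }
  assert (Hln_le := ln_le_sub_1 (cos t) Hc).
  assert (Hln_ge := ln_le_sub_1 (/ cos t) ltac:(apply Rinv_0_lt_compat; lra)).
  rewrite ln_Rinv in Hln_ge by lra.
  assert (a * - / cos t <= a * ln (cos t)) by (apply Rmult_le_compat_l; lra).
  split; nra.
Qed.

(** * Summation under the integral *)

Definition partial_integrand (M : nat) (t : R) : R := sum_n (fun m => series_term m t) M.

Lemma ex_derive_partial_integrand M t : ex_derive (partial_integrand M) t.
Proof.
  apply (ex_derive_sum_n (V := R_NormedModule)); intros m _.
  unfold series_term; auto_derive; auto.
Qed.

Lemma partial_integrand_nonneg M t : 0 <= partial_integrand M t.
Proof.
  unfold partial_integrand; induction M as [|M IH]; [rewrite sum_O | rewrite sum_Sn];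
    assert (H := series_term_nonneg); [apply H|].
  specialize (H (S M) t); unfold plus; simpl; lra.
Qed.

Lemma RInt_partial_integrand_le_primitive M e b : 0 < e <= b -> b < PI / 2 ->
  RInt (partial_integrand M) e b <= primitive b - primitive e.
Proof.
  intros He Hb; rewrite <- RInt_integrand by lra.
  apply RInt_le;
    [lra | apply ex_RInt_smooth, ex_derive_partial_integrand | apply ex_RInt_integrand; lra |].
  intros t Ht; destruct (integrand_tail_le t t M ltac:(lra) ltac:(lra)) as [H _].
  unfold partial_integrand; lra.
Qed.

Lemma RInt_partial_integrand_ge_primitive M e b : 0 < e <= b -> b < PI / 2 ->
  primitive b - primitive e - (b - e) * (integrand b / cos b ^ 2 - sum_n (series_bound b) M)
  <= RInt (partial_integrand M) e b.
Proof.
  intros He Hb.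
  set (tail := integrand b / cos b ^ 2 - sum_n (series_bound b) M).
  assert (Hint := ex_RInt_integrand e b He Hb).
  replace (primitive b - primitive e - (b - e) * tail)
    with (RInt (fun t => integrand t - tail) e b).
  - apply RInt_le; [lra | | apply ex_RInt_smooth, ex_derive_partial_integrand |].
    + apply (ex_RInt_minus (V := R_CompleteNormedModule)); [exact Hint | apply ex_RInt_const].
    + intros t Ht; destruct (integrand_tail_le t b M ltac:(lra) Hb) as [_ H].
      unfold partial_integrand; fold tail in H; lra.
  - rewrite (RInt_minus (V := R_CompleteNormedModule)) by (auto; apply ex_RInt_const).
    rewrite RInt_const, RInt_integrand by lra.
    unfold minus, plus, opp, scal; simpl; unfold mult; simpl; ring.
Qed.

Lemma RInt_partial_integrand_mono M e b : 0 <= e <= b -> b <= PI / 2 ->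
  RInt (partial_integrand M) e b <= RInt (partial_integrand M) 0 (PI / 2).
Proof.
  intros He Hb.
  assert (Hex : forall x y, ex_RInt (partial_integrand M) x y)
    by (intros; apply ex_RInt_smooth, ex_derive_partial_integrand).
  rewrite <- (RInt_Chasles (V := R_CompleteNormedModule) _ 0 e (PI / 2)),
          <- (RInt_Chasles (V := R_CompleteNormedModule) _ e b (PI / 2)) by apply Hex.
  assert (0 <= RInt (partial_integrand M) 0 e)
    by (apply RInt_ge_0; [lra | apply Hex | intros; apply partial_integrand_nonneg]).
  assert (0 <= RInt (partial_integrand M) b (PI / 2))
    by (apply RInt_ge_0; [lra | apply Hex | intros; apply partial_integrand_nonneg]).
  unfold plus; simpl; lra.
Qed.

Lemma RInt_partial_integrand_le M : RInt (partial_integrand M) 0 (PI / 2) <= 3 * ln 2 - 1.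
Proof.
  set (F := partial_integrand M).
  assert (HF := ex_derive_partial_integrand M).
  assert (HPI := PI_RGT_0).
  assert (Hupper : forall b, 0 < b < PI / 2 -> RInt F 0 b <= primitive b).
  { intros b Hb.
    cut (Rbar_le (RInt F 0 b) (primitive b - 0)); [simpl; lra|].
    apply (filterlim_le (F := at_right 0) (fun e => RInt F e b)
             (fun e => primitive b - primitive e) (RInt F 0 b) (primitive b - 0)).
    - apply (filter_imp (fun e => 0 < e < b)); [|apply at_right_interval; lra].
      intros e He; apply RInt_partial_integrand_le_primitive; lra.
    - apply filterlim_within_continuous; [apply continuous_RInt_lower, HF | reflexivity].
    - apply (filterlim_comp _ _ _ primitive (fun y => primitive b - y) _ (locally 0));
        [exact primitive_lim_0|].
      apply (ex_derive_continuous (V := R_NormedModule) (fun y => primitive b - y)).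
      auto_derive; auto. }
  cut (Rbar_le (RInt F 0 (PI / 2)) (3 * ln 2 - 1)); [simpl; lra|].
  apply (filterlim_le (F := at_left (PI / 2)) (fun b => RInt F 0 b) primitive
           (RInt F 0 (PI / 2)) (3 * ln 2 - 1)).
  - apply (filter_imp (fun b => 0 < b < PI / 2)); [|apply at_left_interval; lra].
    exact Hupper.
  - apply filterlim_within_continuous; [apply continuous_RInt_upper, HF | reflexivity].
  - exact primitive_lim_PI2.
Qed.

Lemma RInt_partial_integrand_approx eps : 0 < eps ->
  exists M, 3 * ln 2 - 1 - eps < RInt (partial_integrand M) 0 (PI / 2).
Proof.
  intros Heps.
  assert (HPI := PI_RGT_0); assert (HPI4 := PI_4).
  assert (Hnear : forall l, locally l (fun y => l - eps / 6 < y < l + eps / 6)).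
  { intros l; exists (mkposreal (eps / 6) ltac:(lra)); intros y Hy.
    apply Rabs_lt_between', Hy. }
  destruct (filter_ex (F := at_left (PI / 2)) (fun b => PI / 4 < b < PI / 2
              /\ 3 * ln 2 - 1 - eps / 6 < primitive b < 3 * ln 2 - 1 + eps / 6))
    as [b [Hb Hvb]].
  { apply filter_and; [apply at_left_interval; lra | exact (primitive_lim_PI2 _ (Hnear _))]. }
  destruct (filter_ex (F := at_right 0)
              (fun e => 0 < e < PI / 4 /\ 0 - eps / 6 < primitive e < 0 + eps / 6))
    as [e [He Hve]].
  { apply filter_and; [apply at_right_interval; lra | exact (primitive_lim_0 _ (Hnear _))]. }
  destruct (is_series_series_term_bound b ltac:(lra) _ (Hnear _)) as [M HM].
  exists M; specialize (HM M (le_n M)).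
  change (integrand b / cos b ^ 2 - eps / 6 < sum_n (series_bound b) M
          < integrand b / cos b ^ 2 + eps / 6) in HM.
  destruct (integrand_tail_le b b M ltac:(lra) ltac:(lra)) as [Htail0 Htail].
  assert (Hlow := RInt_partial_integrand_ge_primitive M e b ltac:(lra) ltac:(lra)).
  assert (Hmono := RInt_partial_integrand_mono M e b ltac:(lra) ltac:(lra)).
  assert ((b - e) * (integrand b / cos b ^ 2 - sum_n (series_bound b) M) <= 2 * (eps / 6))
    by (apply Rmult_le_compat; lra).
  lra.
Qed.

Lemma is_series_RInt_series_term :
  is_series (fun m => RInt (series_term m) 0 (PI / 2)) (3 * ln 2 - 1).
Proof.
  assert (Hex : forall m, ex_RInt (series_term m) 0 (PI / 2))
    by (intros m; apply ex_RInt_smooth; intros t; unfold series_term; auto_derive; auto).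
  assert (Hsum : forall M, sum_n (fun m => RInt (series_term m) 0 (PI / 2)) M
                           = RInt (partial_integrand M) 0 (PI / 2)).
  { intros M; symmetry; apply is_RInt_unique, is_RInt_sum_n.
    intros m; apply (RInt_correct (V := R_CompleteNormedModule)), Hex. }
  apply is_series_of_sum_n_sup.
  - intros m; apply RInt_ge_0; [assert (HPI := PI_RGT_0); lra | apply Hex |].
    intros; apply series_term_nonneg.
  - intros M; rewrite Hsum; apply RInt_partial_integrand_le.
  - intros eps Heps; destruct (RInt_partial_integrand_approx eps Heps) as [M HM].
    exists M; rewrite Hsum; exact HM.
Qed.

Lemma summand_S m :
  (Binomial.C (2 * S m) (S m)) ^ 2 * harmonic (2 * S m) / (16 ^ S m * (2 * INR (S m) - 1))
  = 2 / PI * RInt (series_term m) 0 (PI / 2).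
Proof.
  unfold series_term.
  rewrite (RInt_scal (V := R_CompleteNormedModule) (fun t => sin t ^ (2 * m) * cos t ^ 2))
    by (apply ex_RInt_smooth; intros; auto_derive; auto).
  change (scal ?a ?b) with (a * b).
  rewrite RInt_sin_pow_cos2_even; unfold wallis_harmonic.
  assert (H4 : 4 ^ S m <> 0) by (apply pow_nonzero; lra).
  replace (Binomial.C (2 * S m) (S m)) with (wallis (S m) * 4 ^ S m)
    by (unfold wallis; field; exact H4).
  replace (16 ^ S m) with (4 ^ S m * 4 ^ S m) by (rewrite <- Rpow_mult_distr; f_equal; lra).
  rewrite wallis_S_ratio, S_INR.
  assert (0 <= INR m) by apply pos_INR; assert (HPI := PI_RGT_0).
  field; repeat split; lra.
Qed.

Theorem mainTheorem9 :
  is_series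
    (fun n : nat =>
       (Binomial.C (2 * n) n) ^ 2 * harmonic (2 * n)
       / (16 ^ n * (2 * INR n - 1)))
    ((6 * ln 2 - 2) / PI).
Proof.
  apply (is_series_decr_1 (V := R_NormedModule)).
  (* the [n = 0] summand vanishes because [harmonic 0 = 0] *)
  replace (plus _ _) with (2 / PI * (3 * ln 2 - 1))
    by (assert (HPI := PI_RGT_0); unfold plus, opp; simpl; field; lra).
  apply (is_series_ext (fun m => 2 / PI * RInt (series_term m) 0 (PI / 2))).
  - intros m; symmetry; apply summand_S.
  - apply (is_series_scal (V := R_NormedModule)), is_series_RInt_series_term.
Qed.
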